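(* Let $n\geq 1$ and $k\geq 1$ be integers with $k\not\equiv 1 \pmod 3$. Then $\gcd(B_{k,n},B_{k,n+1})=1$.
   Context: For an integer $k\geq 1$, the generalized balancing numbers are defined by $B_{k,0}=0$, $B_{k,1}=1$ and $B_{k,n}=3kB_{k,n-1}+(1-k)B_{k,n-2}$ for $n\geq 2$. *)

From mathcomp Require Import all_boot all_order all_algebra.
Set Implicit Arguments. Unset Strict Implicit. Unset Printing Implicit Defensive.
Import Order.TTheory GRing.Theory Num.Theory.
Local Open Scope ring_scope.

(* Generalized balancing numbers B_{k,n} as integers:
   B_{k,0}=0, B_{k,1}=1, B_{k,n}=3k B_{k,n-1} + (1-k) B_{k,n-2}. *)
Fixpoint balpair (k : nat) (n : nat) : int * int :=
  match n with
  | 0%N => (0, 1)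
  | n'.+1 => let p := balpair k n' in
             (p.2, (3 * k%:Z) * p.2 + (1 - k%:Z) * p.1)
  end.

Definition B (k n : nat) : int := (balpair k n).1.

Lemma B_0 k : B k 0 = 0. Proof. by []. Qed.
Lemma B_1 k : B k 1 = 1. Proof. by []. Qed.
Lemma B_rec k n : B k n.+2 = 3 * k%:Z * B k n.+1 + (1 - k%:Z) * B k n.
Proof. by []. Qed.

(* B_{k,.} is a Lucas sequence u_{n+2} = a u_{n+1} + b u_n with a = 3k and
   b = 1 - k.  Modulo b it reduces to u_{n+1} = a u_n, so when a and b are
   coprime every u_{n+1} is prime to b, and then gcd(u_{n+1}, u_{n+2}) =
   gcd(u_{n+1}, b u_n) = gcd(u_{n+1}, u_n) = ... = gcd(u_0, u_1) = 1.  Finally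
   gcd(3k, 1 - k) = gcd(3, 1 - k), which is 1 exactly when k is not 1 mod 3. *)

From mathcomp Require Import all_boot all_order all_algebra.
From mathcomp Require Import zify ring.
Set Implicit Arguments. Unset Strict Implicit.
Import GRing.Theory.
Local Open Scope ring_scope.

Section LucasSequence.

Variables (a b : int) (u : nat -> int).
Hypothesis u0 : u 0%N = 0.
Hypothesis u1 : u 1%N = 1.
Hypothesis uSS : forall n, u n.+2 = a * u n.+1 + b * u n.
Hypothesis coprime_ab : coprimez a b.

Lemma coprimez_lucas_coeff n : coprimez (u n.+1) b.
Proof.
elim: n => [|n IHn]; first by rewrite u1 /coprimez gcd1z.
rewrite coprimez_sym /coprimez uSS addrC (mulrC b) gcdzMDl -/(coprimez _ _).
by rewrite coprimezMr coprimez_sym coprime_ab coprimez_sym IHn.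
Qed.

Lemma coprimez_lucas_succ n : coprimez (u n) (u n.+1).
Proof.
elim: n => [|n IHn]; first by rewrite u0 u1 /coprimez gcdz1.
rewrite /coprimez uSS gcdzMDl -/(coprimez _ _) coprimezMr.
by rewrite coprimez_lucas_coeff coprimez_sym.
Qed.

End LucasSequence.

Lemma coprimez_3k_1Bk (k : nat) : (k %% 3 != 1)%N -> coprimez (3 * k%:Z) (1 - k%:Z).
Proof.
move=> hk3; have -> : 3 * k%:Z = (-3) * (1 - k%:Z) + 3 by ring.
rewrite coprimez_sym /coprimez gcdzMDl -/(coprimez _ _) coprimez_sym coprimezE.
rewrite prime_coprime //; apply/negP => /dvdnP [q hq].
by move/eqP: hk3; apply; lia.
Qed.

Theorem mainTheorem11 (k n : nat) (hn : (1 <= n)%N) (hk : (1 <= k)%N)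
  (hk3 : (k %% 3 != 1)%N) :
  gcdz (B k n) (B k n.+1) = 1.
Proof.
apply/eqP; apply: (coprimez_lucas_succ (B_0 k) (B_1 k) (B_rec k)).
exact: coprimez_3k_1Bk.
Qed.
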